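(* For every $\delta>0$ and $p\in(0,1)$ there exists a constant $C=C(\delta,p)<\infty$ such that for all $n\ge1$ and $v\in[0,n]^2\cap\mathbb{Z}^2$, \[ \sum_{i\in\mathbb{N}}I_{v,i}(T_n)^2\le C\,\mathbb{P}(v\in\pi_n)^{2-\delta}. \]
   Context: $\mathbb{N}=\{0,1,2,\dots\}$. Let $(X_{u,j})_{u\in\mathbb{Z}^2,j\in\mathbb{N}}$ be i.i.d. Bernoulli($p$) and $\omega_u=\min\{j\ge0:X_{u,j}=1\}$ (i.i.d. geometric weights). $T_n$ is the maximum of $\sum_{x\in\gamma}\omega_x$ over up-right nearest-neighbour paths $\gamma$ from $(0,0)$ to $(n,n)$, viewed as a function of the bits $(X_{u,j})$; geodesics are maximizing paths and $\pi_n$ is the set of vertices lying on at least one geodesic. The influence of bit $(v,i)$ is $I_{v,i}(T_n)=\mathbb{E}\big[\big|\mathbb{E}[T_n\mid (X_{u,j})_{(u,j)\ne(v,i)}]-T_n\big|\big]$. *)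

From HB Require Import structures.
From mathcomp Require Import all_boot all_order all_algebra.
From mathcomp Require Import all_classical all_reals all_analysis.
Set Implicit Arguments. Unset Strict Implicit. Unset Printing Implicit Defensive.
Import Order.TTheory GRing.Theory Num.Theory.
Local Open Scope classical_set_scope.
Local Open Scope ring_scope.

(* A configuration of bits: x u j = X_{u,j}, u in Z^2, j in N. *)
Definition vtx := (int * int)%type.
Definition config := vtx -> nat -> bool.

(* omega_u = min {j >= 0 : X_{u,j} = 1}; on the (null) event that no such j
   exists we use the convention 0. *)
Definition omega (x : config) (u : vtx) : nat :=
  match pselect (exists j, x u j) with
  | left h => ex_minn h
  | right _ => 0%N
  end.

(* Vertices visited by the up-right path from (0,0) encoded by steps s
   (true = right step (+1,0), false = up step (0,+1)). *)
Fixpoint path_from (a : vtx) (s : seq bool) : seq vtx :=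
  match s with
  | [::] => [:: a]
  | b :: s' => a :: path_from (if b then (a.1 + 1, a.2) else (a.1, a.2 + 1)) s'
  end.
Definition path_vertices (s : seq bool) : seq vtx := path_from (0, 0) s.

(* up-right paths from (0,0) to (n,n): 2n steps, exactly n of them right. *)
Definition is_path (n : nat) (s : (2 * n).-tuple bool) : bool := count id s == n.

Definition path_weight (x : config) (s : seq bool) : nat :=
  (\sum_(u <- path_vertices s) omega x u)%N.

Definition T_n (n : nat) (x : config) : nat :=
  (\max_(s : (2 * n).-tuple bool | is_path s) path_weight x s)%N.

Definition geodesic (n : nat) (x : config) (s : (2 * n).-tuple bool) : Prop :=
  is_path s /\ path_weight x s = T_n n x.

Definition in_pi (n : nat) (x : config) (v : vtx) : Prop :=
  exists s : (2 * n).-tuple bool, geodesic x s /\ v \in path_vertices s.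

Definition upd (x : config) (v : vtx) (i : nat) (b : bool) : config :=
  fun u j => if (u == v) && (j == i)%N then b else x u j.

Definition iid_bernoulli {d} {T : measurableType d} {R : realType}
  (P : probability T R) (p : R) (X : T -> config) : Prop :=
  (forall u j, measurable [set w | X w u j]) /\
  (forall (F : seq (vtx * nat)) (b : vtx * nat -> bool), uniq F ->
     P [set w | forall k, k \in F -> X w k.1 k.2 = b k] =
     (\prod_(k <- F) (if b k then p else 1 - p))%:E).

(* Influence of bit (v,i) on T_n:
   E | E[T_n | all other bits] - T_n |, where, the bits being independent,
   E[T_n | (X_{u,j})_{(u,j) <> (v,i)}] = p T_n(X^{(v,i)->1}) + (1-p) T_n(X^{(v,i)->0}). *)
Definition influence {d} {T : measurableType d} {R : realType}
  (P : probability T R) (p : R) (X : T -> config) (n : nat) (v : vtx) (i : nat)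
  : \bar R :=
  (\int[P]_w
     (`| p * (T_n n (upd (X w) v i true))%:R
         + (1 - p) * (T_n n (upd (X w) v i false))%:R
         - (T_n n (X w))%:R |)%:E)%E.

Definition pi_event {d} {T : measurableType d} (X : T -> config) (n : nat) (v : vtx)
  : set T := [set w | in_pi n (X w) v].

(* Setting the bit (v,i) to 1 can only lower omega_v, and only down to i, so it changes
   T_n by at most omega^0_v - i, where omega^0 is the weight with the bit set to 0, and not
   at all unless v lies on an omega^0-geodesic.  Hence I_{v,i} <= sum_{k > i} P(A_k), where
   A_k = {omega^0_v >= k and v on an omega^0-geodesic} does not see the bit (v,i) and is
   therefore independent of {X_{v,i} = 0}, on which omega^0 = omega.  This gives
     (1-p) P(A_k) <= min((1-p)^k, P(v in pi_n)) <= (1-p)^(k th) P(v in pi_n)^(1-th),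
   so I_{v,i} decays geometrically in i with prefactor P(v in pi_n)^(1-th); summing the
   squares with th = min(delta,1)/2 gives the claim. *)

From HB Require Import structures.
From mathcomp Require Import all_boot all_order all_algebra.
From mathcomp Require Import all_classical all_reals all_analysis.
From mathcomp Require Import zify ring lra measurable_realfun.
Import Order.TTheory GRing.Theory Num.Theory.
Local Open Scope classical_set_scope.
Local Open Scope ring_scope.

Set Implicit Arguments.
Unset Strict Implicit.
Unset Printing Implicit Defensive.

Lemma le0_of_le_expr (R : realType) (x a : R) : 0 <= a < 1 ->
  (forall m, x <= a ^+ m) -> x <= 0.
Proof.
case/andP=> a0 a1 xa; apply: (cvgr_to_ge (@cvg_expr _ a _)); last exact: nearW.
by rewrite ger0_norm.
Qed.

Lemma powR_exprAC (R : realType) (x t : R) k : 0 <= x -> (x ^+ k) `^ t = (x `^ t) ^+ k.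
Proof. by move=> x0; rewrite -powR_mulrn // powRAC powR_mulrn // powR_ge0. Qed.

Lemma le_weighted_geomean (R : realType) (x s t th : R) : 0 <= s -> 0 <= t ->
  0 <= th <= 1 -> x <= s -> x <= t -> x <= s `^ th * t `^ (1 - th).
Proof.
move=> s0 t0 /andP[th0 th1] xs xt.
have th1' : 0 <= 1 - th by rewrite subr_ge0.
have powR_split y : 0 <= y -> y `^ th * y `^ (1 - th) = y.
  by move=> y0; rewrite -powRD (addrC th) subrK ?powRr1 // oner_eq0.
have [st|ts] := leP s t.
  apply: (le_trans xs); rewrite -{1}(powR_split s s0) ler_wpM2l ?powR_ge0 //.
  by apply: ge0_ler_powR; rewrite ?nnegrE.
apply: (le_trans xt); rewrite -{1}(powR_split t t0) ler_wpM2r ?powR_ge0 //.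
by apply: ge0_ler_powR; rewrite ?nnegrE // (ltW ts).
Qed.

Lemma sqr_powR_le (R : realType) (q s e : R) : 0 <= q <= 1 -> 0 < s -> e <= s * 2 ->
  (q `^ s) ^+ 2 <= q `^ e.
Proof.
case/andP=> q0 q1 s0 es; have [->|qn0] := eqVneq q 0.
  by rewrite powR0 ?gt_eqF // expr0n powR_ge0.
by rewrite -powR_mulrn ?powR_ge0 // -powRrM ger_powR // lt_neqAle eq_sym qn0 q0.
Qed.

Section ExtendedSeries.
Local Open Scope ereal_scope.
Context (R : realType).

Lemma le_nneseries_ones (u : nat -> \bar R) (m : nat) : (forall j, 0 <= u j) ->
  (forall j, (j < m)%N -> u j = 1) -> (m%:R)%:E <= \sum_(0 <= j <oo) u j.
Proof.
move=> u0 u1; apply: le_trans (nneseries_lim_ge m (fun j _ _ => u0 j)).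
rewrite big_mkord (eq_bigr (fun=> 1)) => [|j _]; last exact: u1.
by rewrite sumEFin sumr_const card_ord.
Qed.

Lemma nneseries_le_geometric (u : nat -> \bar R) (c r : R) : (0 <= c)%R ->
  (0 < r < 1)%R -> (forall j, 0 <= u j) -> (forall j, u j <= (c * r ^+ j)%:E) ->
  \sum_(0 <= j <oo) u j <= (c / (1 - r))%:E.
Proof.
move=> c0 /andP[r0 r1] u0 ur; apply: lime_le.
  exact: is_cvg_nneseries (fun j _ _ => u0 j).
apply: nearW => N; apply: (@le_trans _ _ (\sum_(0 <= j < N) (c * r ^+ j)%:E)).
  by apply: lee_sum => j _; apply: ur.
by rewrite sumEFin lee_fin; apply: geometric_le_lim; rewrite ?gtr0_norm.
Qed.

End ExtendedSeries.

(* No measurability is needed: the integral of a nonnegative function is the supremum of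
   the integrals of the simple functions below it. *)
Lemma ge0_le_integral_nonmeasurable d (T : measurableType d) (R : realType)
  (mu : {measure set T -> \bar R}) (f g : T -> \bar R) :
  (forall x, 0 <= f x)%E -> (forall x, f x <= g x)%E ->
  (\int[mu]_x f x <= \int[mu]_x g x)%E.
Proof.
move=> f0 fg; have g0 x : (0 <= g x)%E by apply: le_trans (f0 x) (fg x).
rewrite !ge0_integralE //; apply: le_ereal_sup => _ [h hf <-]; exists h => //= x.
by apply: le_trans (hf x) _; rewrite /patch; case: ifP.
Qed.

Lemma probability_fineK d (T : measurableType d) (R : realType) (P : probability T R)
  (A : set T) : measurable A -> P A = (fine (P A))%:E.
Proof. by move=> mA; rewrite fineK // fin_num_measure. Qed.

Lemma natr_distn (R : numDomainType) (a b : nat) :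
  (`|a - b|%N)%:R = `|a%:R - b%:R : R|.
Proof. by rewrite natr_absz intr_norm intrB. Qed.

(** * First successes and single-bit updates *)

Definition first_success (f : nat -> bool) : nat :=
  match pselect (exists j, f j) with left h => ex_minn h | right _ => 0%N end.

Lemma omegaE x u : omega x u = first_success (x u). Proof. by []. Qed.

Lemma first_successP (f : nat -> bool) : (exists j, f j) ->
  f (first_success f) /\ forall j, f j -> (first_success f <= j)%N.
Proof. by rewrite /first_success; case: pselect => // h _; case: ex_minnP. Qed.

Lemma first_success_none (f : nat -> bool) :
  ~ (exists j, f j) -> first_success f = 0%N.
Proof. by rewrite /first_success; case: pselect. Qed.

Lemma before_first_success (f : nat -> bool) j :
  (j < first_success f)%N -> f j = false.
Proof.
move=> jf; apply/negbTE/negP => fj.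
by have [_ /(_ j fj)] := first_successP (ex_intro _ j fj); rewrite leqNgt jf.
Qed.

Lemma first_success_eq (f : nat -> bool) m : first_success f = m <->
  (f m /\ forall j, (j < m)%N -> f j = false) \/ (m = 0%N /\ forall j, f j = false).
Proof.
have [ex|nex] := pselect (exists j, f j); last first.
  rewrite first_success_none //; split=> [<-|[[fm _]|[-> _]]] //.
    by right; split=> // j; apply/negbTE/negP => fj; apply: nex; exists j.
  by case: nex; exists m.
have [fs fs_min] := first_successP ex; split=> [<-|[[fm hm]|[_ hn]]].
- by left; split=> // j; apply: before_first_success.
- apply/eqP; rewrite eqn_leq fs_min // leqNgt; apply/negP => lt.
  by move: (hm _ lt); rewrite fs.
- by case: ex => j; rewrite hn.
Qed.

Lemma first_success_mono (f g : nat -> bool) : (forall j, f j -> g j) ->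
  (exists j, f j) -> (first_success g <= first_success f)%N.
Proof.
move=> fg [j fj]; have [ffs _] := first_successP (ex_intro _ j fj).
by have [_ ->] // := first_successP (ex_intro g _ (fg _ ffs)); apply: fg.
Qed.

Definition set_bit (f : nat -> bool) (i : nat) (b : bool) : nat -> bool :=
  fun j => if (j == i)%N then b else f j.

Lemma set_bit_at f i b : set_bit f i b i = b.
Proof. by rewrite /set_bit eqxx. Qed.

Lemma first_success_set_true f i : (first_success (set_bit f i true) <= i)%N.
Proof.
have [_ ->] // := first_successP (ex_intro (set_bit f i true) i (set_bit_at f i true)).
exact: set_bit_at.
Qed.

Lemma set_bit_false_true f i j : set_bit f i false j -> set_bit f i true j.
Proof. by rewrite /set_bit; case: (j == i)%N. Qed.

Lemma first_success_set_bit_le f i : (exists j, set_bit f i false j) ->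
  (first_success (set_bit f i true) <= first_success (set_bit f i false))%N.
Proof. exact/first_success_mono/set_bit_false_true. Qed.

Lemma first_success_set_bit_gap f i :
  (first_success (set_bit f i false) - first_success (set_bit f i true) <=
   first_success (set_bit f i false) - i)%N.
Proof.
have := first_success_set_true f i; rewrite leq_eqVlt => /orP[/eqP->//|lt].
have [fs1 _] := first_successP (ex_intro (set_bit f i true) i (set_bit_at f i true)).
have fs0 : set_bit f i false (first_success (set_bit f i true)).
  by move: fs1; rewrite /set_bit (ltn_eqF lt).
have [_ /(_ _ fs0)] := first_successP (ex_intro (set_bit f i false) _ fs0).
by rewrite -subn_eq0 => /eqP->.
Qed.

Lemma upd_row x v i b : upd x v i b v = set_bit (x v) i b.
Proof. by apply/funext => j; rewrite /upd /set_bit eqxx. Qed.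

Lemma upd_other x v i b u : u != v -> upd x v i b u = x u.
Proof. by move=> uv; apply/funext => j; rewrite /upd (negbTE uv). Qed.

Lemma upd_id x v i : upd x v i (x v i) = x.
Proof.
apply/funext => u; apply/funext => j; rewrite /upd.
by case: eqP => [->|//]; case: eqP => [->|].
Qed.

Lemma upd_same x v i b : x v i = b -> upd x v i b = x.
Proof. by move=> <-; apply: upd_id. Qed.

Lemma omega_upd_other x v i b u : u != v -> omega (upd x v i b) u = omega x u.
Proof. by move=> uv; rewrite !omegaE upd_other. Qed.

Lemma omega_upd x v i b : omega (upd x v i b) v = first_success (set_bit (x v) i b).
Proof. by rewrite omegaE upd_row. Qed.

(** * Last-passage times under a single bit flip *)

Lemma path_from_level (s : seq bool) (a u : vtx) :
  u \in path_from a s -> a.1 + a.2 <= u.1 + u.2.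
Proof.
elim: s a => [|b s IH] a /=; first by rewrite inE => /eqP->.
by rewrite inE => /orP[/eqP->//|/IH]; case: b => /=; lia.
Qed.

Lemma path_from_uniq (s : seq bool) (a : vtx) : uniq (path_from a s).
Proof.
elim: s a => [|b s IH] a //=; rewrite IH andbT; apply/negP => /path_from_level.
by case: b => /=; lia.
Qed.

Lemma exists_path n : exists s : (2 * n).-tuple bool, is_path s.
Proof.
have size_s : size (nseq n true ++ nseq n false) == (2 * n)%N.
  by rewrite size_cat !size_nseq; apply/eqP; lia.
by exists (Tuple size_s); rewrite /is_path /= count_cat !count_nseq /=; apply/eqP; lia.
Qed.

Lemma path_weight_le_T_n n x (s : (2 * n).-tuple bool) :
  is_path s -> (path_weight x s <= T_n n x)%N.
Proof. exact: (@leq_bigmax_cond _ (fun s => is_path s) (fun s => path_weight x s)). Qed.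

Lemma exists_geodesic n x : exists s : (2 * n).-tuple bool, geodesic x s.
Proof.
have [s0 ps0] := exists_path n.
have := @bigop.bigmax_eq_arg _ s0 (fun s => is_path s) (fun s => path_weight x s) ps0.
by case: arg_maxnP => // s ps _ e; exists s; split; rewrite // /T_n e.
Qed.

Section OmegaComparison.
Variables (y z : config) (v : vtx).
Hypothesis omega_yz : forall u, u != v -> omega y u = omega z u.

Lemma sum_omega_eq (r : seq vtx) : v \notin r ->
  (\sum_(u <- r) omega y u = \sum_(u <- r) omega z u)%N.
Proof.
by move=> vr; apply: eq_big_seq => u ur; apply: omega_yz; apply: contraNneq vr => <-.
Qed.

Lemma sum_omega_le (r : seq vtx) : uniq r ->
  (\sum_(u <- r) omega y u <= \sum_(u <- r) omega z u + (omega y v - omega z v))%N.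
Proof.
move=> ur; have [vr|/sum_omega_eq->] := boolP (v \in r); last exact: leq_addr.
rewrite !(big_rem v vr) /= sum_omega_eq ?mem_rem_uniqF //.
by rewrite addnAC leq_add2r -leq_subLR.
Qed.

Lemma T_n_le_shift n : (T_n n y <= T_n n z + (omega y v - omega z v))%N.
Proof.
have [s [ps <-]] := exists_geodesic n y.
apply: leq_trans (sum_omega_le (path_from_uniq _ _)) _.
by rewrite leq_add2r path_weight_le_T_n.
Qed.

Lemma T_n_le_off_geodesics n : ~ in_pi n y v -> (T_n n y <= T_n n z)%N.
Proof.
move=> npi; have [s [ps e]] := exists_geodesic n y.
have vs : v \notin path_vertices s by apply/negP => vs; apply: npi; exists s.
by rewrite -e /path_weight sum_omega_eq // path_weight_le_T_n.
Qed.

End OmegaComparison.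

Definition flip_gap n v i (x : config) : nat :=
  `|T_n n (upd x v i false) - T_n n (upd x v i true)|%N.

(* The second part is the event that row v has no success once bit i is cleared: there
   omega_v takes the junk value 0, and setting the bit can increase T_n. *)
Definition gap_event n v i k : set config :=
  [set y | (k <= omega (upd y v i false) v)%N /\ in_pi n (upd y v i false) v] `|`
  [set y | forall j, upd y v i false v j = false].

Section BitFlip.
Variables (n : nat) (x : config) (v : vtx) (i : nat).
Local Notation x0 := (upd x v i false).
Local Notation x1 := (upd x v i true).

Lemma omega_upd_flip b c u : u != v -> omega (upd x v i b) u = omega (upd x v i c) u.
Proof. by move=> uv; rewrite !omega_upd_other. Qed.

Lemma T_n_flip_down : (T_n n x0 <= T_n n x1 + (omega x0 v - i))%N.
Proof.
apply: leq_trans (T_n_le_shift (omega_upd_flip false true) n) _.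
by rewrite leq_add2l !omega_upd first_success_set_bit_gap.
Qed.

Lemma T_n_flip_up : (exists j, x0 v j) -> (T_n n x1 <= T_n n x0)%N.
Proof.
rewrite upd_row => /first_success_set_bit_le; rewrite -!omega_upd -subn_eq0 => /eqP e.
by have := T_n_le_shift (omega_upd_flip true false) n; rewrite e addn0.
Qed.

Lemma flip_gap_gap_event j : (j < flip_gap n v i x)%N -> gap_event n v i (i.+1 + j) x.
Proof.
rewrite /flip_gap => hj; have [succ|nsucc] := pselect (exists j, x0 v j); last first.
  by right=> j'; apply/negbTE/negP => h; apply: nsucc; exists j'.
have [pi|npi] := pselect (in_pi n x0 v); last first.
  have := T_n_le_off_geodesics (omega_upd_flip false true) npi.
  by move: hj (T_n_flip_up succ); lia.
by left; split=> //; move: hj (T_n_flip_up succ) T_n_flip_down; lia.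
Qed.

End BitFlip.

Lemma deviation_le_flip_gap (R : numDomainType) (p : R) n x v i : 0 <= p <= 1 ->
  `| p * (T_n n (upd x v i true))%:R + (1 - p) * (T_n n (upd x v i false))%:R
     - (T_n n x)%:R | <= (flip_gap n v i x)%:R.
Proof.
case/andP=> p0 p1; rewrite /flip_gap natr_distn -[in T_n n x](upd_id x v i).
case: (x v i);
  set t0 : R := (T_n n (upd x v i false))%:R; set t1 : R := (T_n n (upd x v i true))%:R.
- have -> : p * t1 + (1 - p) * t0 - t1 = (1 - p) * (t0 - t1) by ring.
  by rewrite normrM; apply: ler_piMl => //; rewrite ger0_norm ?subr_ge0 // gerBl.
- have -> : p * t1 + (1 - p) * t0 - t0 = - p * (t0 - t1) by ring.
  by rewrite normrM normrN; apply: ler_piMl => //; rewrite ger0_norm.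
Qed.

Section NatMeasurable.
Context d (T : measurableType d).

Definition nat_measurable (f : T -> nat) := forall k, measurable [set w | f w = k].

Lemma nat_measurable_pred (f : T -> nat) (Q : nat -> Prop) :
  nat_measurable f -> measurable [set w | Q (f w)].
Proof.
move=> mf; rewrite (_ : [set w | Q (f w)] = \bigcup_(k in Q) [set w | f w = k]).
  exact: bigcup_measurable.
by apply/seteqP; split=> w /=; [exists (f w) | case=> k Qk ->].
Qed.

Lemma nat_measurable_pred2 (f g : T -> nat) (Q : nat -> nat -> Prop) :
  nat_measurable f -> nat_measurable g -> measurable [set w | Q (f w) (g w)].
Proof.
move=> mf mg; rewrite (_ : [set w | Q (f w) (g w)] =
  \bigcup_k ([set w | f w = k] `&` [set w | Q k (g w)])).
  apply: bigcupT_measurable => k.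
  by apply: measurableI => //; apply: nat_measurable_pred.
by apply/seteqP; split=> w /=; [exists (f w) | case=> k _ [->]].
Qed.

Lemma nat_measurable_cst c : nat_measurable (fun=> c).
Proof.
move=> k; have [<-|ck] := eqVneq c k.
  by rewrite (_ : [set _ | _] = setT) //; apply/seteqP.
rewrite (_ : [set _ | _] = set0) //.
by apply/seteqP; split=> // w /= /eqP; rewrite (negbTE ck).
Qed.

Lemma nat_measurable_big (I : Type) (r : seq I) (Q : pred I) (F : I -> T -> nat) op x0 :
  (forall i, nat_measurable (F i)) ->
  nat_measurable (fun w => \big[op/x0]_(i <- r | Q i) F i w).
Proof.
move=> mF; elim: r => [|i r IH].
  by under eq_fun do rewrite big_nil; apply: nat_measurable_cst.
under eq_fun do rewrite big_cons; case: (Q i) => // k.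
exact: (nat_measurable_pred2 (fun a b => op a b = k)).
Qed.

Variable Y : T -> config.
Hypothesis measurable_Y : forall u j, measurable [set w | Y w u j].

Lemma measurable_bit u j b : measurable [set w | Y w u j = b].
Proof.
case: b; first exact: measurable_Y.
rewrite (_ : [set _ | _] = ~` [set w | Y w u j]); first exact/measurableC.
by apply/seteqP; split=> w /=; [move=> -> | move/negP/negbTE].
Qed.

Lemma measurable_zero_prefix u m :
  measurable [set w | forall j, (j < m)%N -> Y w u j = false].
Proof.
rewrite (_ : [set _ | _] =
  \bigcap_(j in [set j | (j < m)%N]) [set w | Y w u j = false]).
  by apply: bigcap_measurableType => j _; apply: measurable_bit.
by apply/seteqP; split=> w /=.
Qed.

Lemma measurable_no_success u : measurable [set w | forall j, Y w u j = false].
Proof.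
rewrite (_ : [set _ | _] = \bigcap_j [set w | Y w u j = false]).
  by apply: bigcapT_measurable => j; apply: measurable_bit.
by apply/seteqP; split=> w /= h j; [move=> _ | apply: h].
Qed.

Lemma nat_measurable_omega u : nat_measurable (fun w => omega (Y w) u).
Proof.
move=> m; rewrite (_ : [set _ | _] =
  ([set w | Y w u m = true] `&` [set w | forall j, (j < m)%N -> Y w u j = false]) `|`
  ([set w | m = 0%N] `&` [set w | forall j, Y w u j = false])).
  apply: measurableU; apply: measurableI.
  - exact: measurable_bit.
  - exact: measurable_zero_prefix.
  - exact: (nat_measurable_pred (fun k => m = k) (nat_measurable_cst 0)).
  - exact: measurable_no_success.
by apply/seteqP; split=> w; rewrite /= omegaE first_success_eq.
Qed.

Lemma nat_measurable_path_weight s : nat_measurable (fun w => path_weight (Y w) s).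
Proof. by apply: nat_measurable_big => u; apply: nat_measurable_omega. Qed.

Lemma nat_measurable_T_n n : nat_measurable (fun w => T_n n (Y w)).
Proof. by apply: nat_measurable_big => s; apply: nat_measurable_path_weight. Qed.

Lemma measurable_in_pi n v : measurable [set w | in_pi n (Y w) v].
Proof.
pose S := [set s : (2 * n).-tuple bool | is_path s /\ v \in path_vertices s].
rewrite (_ : [set _ | _] =
  \bigcup_(s in S) [set w | path_weight (Y w) s = T_n n (Y w)]).
  apply: fin_bigcup_measurable => [|s _]; first exact: finite_finset.
  exact: nat_measurable_pred2 (nat_measurable_path_weight s) (nat_measurable_T_n n).
apply/seteqP; split=> w /=; first by case=> s [[ps e] vs]; exists s.
by case=> s [ps vs] e; exists s.
Qed.

End NatMeasurable.

Lemma measurable_gap_event d (T : measurableType d) (Y : T -> config) n v i k :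
  (forall u j, (u, j) != (v, i) -> measurable [set w | Y w u j]) ->
  measurable [set w | gap_event n v i k (Y w)].
Proof.
move=> mY; pose Y0 w := upd (Y w) v i false.
have mY0 u j : measurable [set w | Y0 w u j].
  case: (eqVneq (u, j) (v, i)) => [[-> ->]|uj].
    rewrite (_ : [set _ | _] = set0) //.
    by apply/seteqP; split=> // w; rewrite /= /Y0 /upd !eqxx.
  have e : ((u == v) && (j == i)) = false by apply: contraNF uj => /andP[/eqP-> /eqP->].
  rewrite (_ : [set _ | _] = [set w | Y w u j]); first exact: mY.
  by apply/seteqP; split=> w; rewrite /= /Y0 /upd e.
suff : measurable
   (([set w | (k <= omega (Y0 w) v)%N] `&` [set w | in_pi n (Y0 w) v]) `|`
    [set w | forall j, Y0 w v j = false]) by [].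
apply: measurableU; last exact: measurable_no_success.
apply: measurableI; last exact: measurable_in_pi.
exact: (nat_measurable_pred (fun z => (k <= z)%N) (nat_measurable_omega mY0 v)).
Qed.

(** * Independence of a bit from the cylinders avoiding it *)

Section BitIndependence.
Context d (T : measurableType d) (R : realType) (P : probability T R) (p : R)
  (X : T -> config).
Hypothesis iidX : iid_bernoulli P p X.

Definition cylinder (F : seq (vtx * nat)) (b : vtx * nat -> bool) : set T :=
  [set w | forall k, k \in F -> X w k.1 k.2 = b k].

Lemma measurable_cylinder F b : measurable (cylinder F b).
Proof.
rewrite (_ : cylinder F b = \bigcap_(k in [set` F]) [set w | X w k.1 k.2 = b k]).
  apply: fin_bigcap_measurable => [|k _]; first exact: finite_seq.
  exact: measurable_bit iidX.1 _ _ _.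
by apply/seteqP; split=> w /=.
Qed.

Lemma P_cylinder F b :
  P (cylinder F b) = (\prod_(k <- undup F) (if b k then p else 1 - p))%:E.
Proof.
rewrite -(iidX.2 _ b (undup_uniq F)); congr (P _).
by apply/seteqP; split=> w /= h k kF; apply: h; rewrite ?mem_undup in kF *.
Qed.

Variables (v : vtx) (i : nat).

Definition cylinders_avoiding : set (set T) :=
  [set A | A = set0 \/ exists F b, (v, i) \notin F /\ A = cylinder F b].

Definition bit_false : set T := [set w | X w v i = false].

Definition independent_of_bit_false : set (set T) :=
  [set A | measurable A /\ P (A `&` bit_false) = ((1 - p)%:E * P A)%E].

Lemma measurable_bit_false : measurable bit_false.
Proof. exact: measurable_bit iidX.1 _ _ _. Qed.

Lemma P_bit_false : P bit_false = (1 - p)%:E.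
Proof.
rewrite (_ : bit_false = cylinder [:: (v, i)] (fun=> false)).
  by rewrite P_cylinder /= big_cons big_nil mulr1.
apply/seteqP; split=> w /= h; first by move=> k /[!inE] /eqP->.
by apply: (h (v, i)); rewrite inE.
Qed.

Lemma cylinders_avoiding_independent : cylinders_avoiding `<=` independent_of_bit_false.
Proof.
move=> A [->|[F [b [vF ->]]]].
  by split=> //; rewrite set0I measure0 mule0.
split; first exact: measurable_cylinder.
pose b' k := if k == (v, i) then false else b k.
have b'E k : k \in F -> b' k = b k.
  by move=> kF; rewrite /b' ifF //; apply: contraNF vF => /eqP <-.
rewrite (_ : _ `&` _ = cylinder ((v, i) :: F) b').
  rewrite !P_cylinder /= (negbTE vF) big_cons [b' _]/b' eqxx -EFinM.
  by congr (_ * _)%:E; apply: eq_big_seq => k; rewrite mem_undup => /b'E ->.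
apply/seteqP; split=> w /=.
  by case=> h h0 k; rewrite inE => /predU1P[->|kF]; [rewrite /b' eqxx | rewrite b'E ?h].
move=> h; split=> [k kF|]; last by have := h _ (mem_head _ _); rewrite /b' eqxx.
by rewrite -b'E // h // inE kF orbT.
Qed.

Lemma cylinders_avoiding_setI_closed : setI_closed cylinders_avoiding.
Proof.
move=> A B [->|[F1 [b1 [vF1 ->]]]]; first by left; rewrite set0I.
move=> [->|[F2 [b2 [vF2 ->]]]]; first by left; rewrite setI0.
have [[k [k1 [k2 bk]]]|agree] :=
  pselect (exists k, k \in F1 /\ k \in F2 /\ b1 k <> b2 k).
  by left; apply/seteqP; split=> // w /= [h1 h2]; apply: bk; rewrite -h1 // -h2.
right; exists (F1 ++ F2), (fun k => if k \in F1 then b1 k else b2 k).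
split; first by rewrite mem_cat negb_or vF1 vF2.
apply/seteqP; split=> w /=.
  case=> h1 h2 k; rewrite mem_cat.
  by case: ifP => [kF1 _|_ /= kF2]; [apply: h1 | apply: h2].
move=> h; split=> k kF; have := h k; rewrite mem_cat kF ?orbT => /(_ isT) //.
by case: ifP => // kF1 ->; apply: contrapT => ne; apply: agree; exists k.
Qed.

Lemma dynkin_independent_of_bit_false : dynkin independent_of_bit_false.
Proof.
split.
- by split=> //; rewrite setTI P_bit_false probability_setT mule1.
- move=> A [mA PA]; split; first exact: measurableC.
  have PD : P (bit_false `\` A) = (P bit_false - P (A `&` bit_false))%E.
    rewrite setIC; apply: measureD => //; first exact: measurable_bit_false.
    by apply: le_lt_trans (probability_le1 P measurable_bit_false) _; rewrite ltey.
  rewrite setIC -setDE PD PA P_bit_false probability_setC //.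
  have fA : P A \is a fin_num by rewrite fin_num_measure.
  by rewrite -(fineK fA) -!EFinM -!EFinB; congr _%:E; ring.
- move=> F tF hF; split; first by apply: bigcupT_measurable => k; case: (hF k).
  rewrite setI_bigcupl measure_bigcup; last first.
  + exact: trivIset_setIr.
  + by move=> k _; apply: measurableI; [case: (hF k) | exact: measurable_bit_false].
  rewrite measure_bigcup //; last by move=> k _; case: (hF k).
  rewrite -nneseriesZl; last by move=> k _; exact: measure_ge0.
  by apply: eq_eseriesr => k _; case: (hF k).
Qed.

Lemma independent_bit_false A : <<s cylinders_avoiding >> A ->
  P (A `&` bit_false) = ((1 - p)%:E * P A)%E.
Proof.
have : <<s cylinders_avoiding >> `<=` independent_of_bit_false.
  apply: (lambda_system_subset cylinders_avoiding_setI_closed) => //.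
  - exact/dynkin_lambda_system/dynkin_independent_of_bit_false.
  - exact: cylinders_avoiding_independent.
by move=> /[apply] -[].
Qed.

End BitIndependence.

Section InfluenceBound.
Context d (T : measurableType d) (R : realType) (P : probability T R) (p : R)
  (X : T -> config).
Hypotheses (iidX : iid_bernoulli P p X) (p_gt0 : 0 < p) (p_lt1 : p < 1).
Variables (n : nat) (v : vtx).

Local Notation a := (1 - p).
Local Notation q := (fine (P (pi_event X n v))).

Lemma a_gt0 : 0 < a. Proof. by rewrite subr_gt0. Qed.

Lemma a_lt1 : a < 1. Proof. by rewrite ltrBlDr ltrDl. Qed.

Lemma measurable_pi_event : measurable (pi_event X n v).
Proof. exact: measurable_in_pi iidX.1 n v. Qed.

Lemma pi_event_fineK : P (pi_event X n v) = q%:E.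
Proof. exact/probability_fineK/measurable_pi_event. Qed.

Lemma P_pi_event_ge0 : 0 <= q.
Proof. by rewrite -lee_fin -pi_event_fineK. Qed.

Lemma P_pi_event_le1 : q <= 1.
Proof.
by rewrite -lee_fin -pi_event_fineK; apply/probability_le1/measurable_pi_event.
Qed.

Definition zero_prefix m := cylinder X [seq (v, j) | j <- iota 0 m] (fun=> false).

Lemma P_zero_prefix m : P (zero_prefix m) = (a ^+ m)%:E.
Proof.
rewrite (P_cylinder iidX) undup_id ?map_inj_uniq ?iota_uniq //; last by move=> j k [].
by rewrite big_map -(subn0 m) prodr_const_nat.
Qed.

Lemma zero_prefixP m w : (forall j, (j < m)%N -> X w v j = false) -> zero_prefix m w.
Proof. by move=> h k /mapP[j]; rewrite mem_iota add0n => /andP[_ /h] ? ->. Qed.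

Definition no_success := [set w | forall j, X w v j = false].

Lemma P_no_success : P no_success = 0%E.
Proof.
have mN : measurable no_success by apply: measurable_no_success iidX.1 _.
apply/eqP; rewrite eq_le measure_ge0 andbT probability_fineK // lee_fin.
apply: (@le0_of_le_expr _ _ a); first by rewrite (ltW a_gt0) a_lt1.
move=> m; rewrite -lee_fin -probability_fineK // -P_zero_prefix.
apply: le_measure; rewrite ?inE //; first exact: measurable_cylinder iidX _ _.
by move=> w nw; apply: zero_prefixP => j _; apply: nw.
Qed.

Definition gap_set i k := [set w | gap_event n v i k (X w)].

(* Run [measurable_gap_event] on [T] equipped with the sigma-algebra generated by the
   cylinders avoiding (v,i). *)
Lemma sigma_gap_set i k : <<s cylinders_avoiding X v i >> (gap_set i k).
Proof.
apply: (@measurable_gap_event _ (g_sigma_algebraType (cylinders_avoiding X v i))).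
move=> u j uj; apply: sub_sigma_algebra; right.
exists [:: (u, j)], (fun=> true); split; first by rewrite inE eq_sym.
apply/seteqP; split=> w /= h; first by move=> l /[!inE] /eqP->.
by apply: (h (u, j)); rewrite inE.
Qed.

Lemma measurable_gap_set i k : measurable (gap_set i k).
Proof. by apply: measurable_gap_event => u j _; apply: iidX.1. Qed.

Lemma gap_set_bit_false_zero_prefix i k :
  gap_set i k `&` bit_false X v i `<=` zero_prefix k.
Proof.
move=> w [gw bw]; apply: zero_prefixP => j jk.
move: gw; rewrite /gap_set /gap_event /= (upd_same bw) omegaE => -[[kw _]|//].
by apply: before_first_success; apply: leq_trans kw.
Qed.

Lemma gap_set_bit_false_pi i k :
  gap_set i k `&` bit_false X v i `<=` pi_event X n v `|` no_success.
Proof.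
move=> w [gw bw]; move: gw.
by rewrite /gap_set /gap_event /= (upd_same bw) => -[[]|]; [left | right].
Qed.

Lemma P_gap_set_bit_false i k :
  P (gap_set i k `&` bit_false X v i) = (a * fine (P (gap_set i k)))%:E.
Proof.
rewrite (independent_bit_false iidX (@sigma_gap_set i k)) EFinM.
by rewrite -probability_fineK //; apply: measurable_gap_set.
Qed.

Lemma measurable_gap_set_bit_false i k : measurable (gap_set i k `&` bit_false X v i).
Proof. exact/measurableI/measurable_bit_false/iidX/measurable_gap_set. Qed.

Lemma P_gap_set_le_expr i k : a * fine (P (gap_set i k)) <= a ^+ k.
Proof.
rewrite -lee_fin -P_gap_set_bit_false -P_zero_prefix.
apply: le_measure; rewrite ?inE; last exact: gap_set_bit_false_zero_prefix.
  exact: measurable_gap_set_bit_false.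
exact: measurable_cylinder iidX _ _.
Qed.

Lemma P_gap_set_le_pi i k : a * fine (P (gap_set i k)) <= q.
Proof.
have mN : measurable no_success by apply: measurable_no_success iidX.1 _.
rewrite -lee_fin -P_gap_set_bit_false -pi_event_fineK.
rewrite -[P (pi_event _ _ _)]adde0 -P_no_success.
apply: le_trans (measureU2 P measurable_pi_event mN).
apply: le_measure; rewrite ?inE; last exact: gap_set_bit_false_pi.
  exact: measurable_gap_set_bit_false.
exact: measurableU measurable_pi_event mN.
Qed.

Variable th : R.
Hypotheses (th_gt0 : 0 < th) (th_le1 : th <= 1).
Local Notation r := (a `^ th).

Lemma r_gt0 : 0 < r. Proof. exact/powR_gt0/a_gt0. Qed.

Lemma r_lt1 : r < 1.
Proof.
have := @gt0_ltr_powR R th th_gt0 a 1; rewrite !nnegrE /= powR1.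
by apply; rewrite ?ler01 ?(ltW a_gt0) ?a_lt1.
Qed.

Lemma P_gap_set_le i k : fine (P (gap_set i k)) <= r ^+ k * q `^ (1 - th) / a.
Proof.
rewrite ler_pdivlMr ?a_gt0 // mulrC -powR_exprAC; last exact: ltW a_gt0.
apply: le_weighted_geomean; rewrite ?exprn_ge0 ?(ltW a_gt0) ?(ltW th_gt0) //.
- exact: P_pi_event_ge0.
- exact: P_gap_set_le_expr.
- exact: P_gap_set_le_pi.
Qed.

Lemma influence_le_gap_sets i :
  (influence P p X n v i <= \sum_(0 <= j <oo) P (gap_set i (i.+1 + j)))%E.
Proof.
pose g w := (\sum_(0 <= j <oo) (\1_(gap_set i (i.+1 + j)) w : R)%:E)%E.
rewrite /influence; apply: le_trans.
  apply: (@ge0_le_integral_nonmeasurable _ _ _ P _ g) => w; first by rewrite lee_fin.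
  apply: le_trans (le_nneseries_ones (m := flip_gap n v i (X w)) _ _).
  - by rewrite lee_fin deviation_le_flip_gap // (ltW p_gt0) (ltW p_lt1).
  - by move=> j; rewrite lee_fin indicE.
  - by move=> j /flip_gap_gap_event gj; rewrite indicE mem_set.
have mg j : measurable_fun setT (EFin \o (\1_(gap_set i (i.+1 + j)) : T -> R)).
  exact/measurable_EFinP/measurable_indic/measurable_gap_set.
rewrite /g integral_nneseries //.
apply: lee_nneseries => [j _ _|j _].
  by apply: integral_ge0 => w _; rewrite lee_fin.
by rewrite integral_indic ?setIT //; apply: measurable_gap_set.
Qed.

Lemma influence_le_geometric i :
  (influence P p X n v i <= (q `^ (1 - th) * (r / (a * (1 - r))) * r ^+ i)%:E)%E.
Proof.
apply: le_trans (influence_le_gap_sets i) _.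
have -> : q `^ (1 - th) * (r / (a * (1 - r))) * r ^+ i =
          (r ^+ i.+1 * q `^ (1 - th) / a) / (1 - r).
  by rewrite exprS; field; rewrite subr_eq0 eq_sym (lt_eqF r_lt1) gt_eqF ?a_gt0.
apply: nneseries_le_geometric => [||j|j].
- by rewrite divr_ge0 ?mulr_ge0 ?exprn_ge0 ?powR_ge0 ?(ltW a_gt0) ?(ltW r_gt0).
- by rewrite r_gt0 r_lt1.
- exact: measure_ge0.
- rewrite probability_fineK ?lee_fin; last exact: measurable_gap_set.
  suff -> : r ^+ i.+1 * q `^ (1 - th) / a * r ^+ j =
            r ^+ (i.+1 + j) * q `^ (1 - th) / a.
    exact: P_gap_set_le.
  by rewrite exprD; ring.
Qed.

End InfluenceBound.

Lemma exists_small_exponent (R : realFieldType) (delta : R) : 0 < delta ->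
  exists th : R, [/\ 0 < th, th < 1 & 2 - delta <= (1 - th) * 2].
Proof.
move=> delta_gt0; exists (Num.min delta 1 / 2).
have m_gt0 : 0 < Num.min delta 1 by rewrite lt_min delta_gt0 ltr01.
have m_le1 : Num.min delta 1 <= 1 by rewrite ge_min lexx orbT.
have m_le : Num.min delta 1 <= delta by rewrite ge_min lexx.
by split; lra.
Qed.

Lemma influence_ge0 d (T : measurableType d) (R : realType) (P : probability T R)
  p X n v i :
  (0 <= influence P p X n v i)%E.
Proof. by apply: integral_ge0 => w _; rewrite lee_fin. Qed.

Unset Implicit Arguments. Set Strict Implicit.

Theorem lemma5p1 (R : realType) (delta p : R) :
  0 < delta -> 0 < p < 1 ->
  exists C : R,
    forall (d : measure_display) (T : measurableType d) (P : probability T R)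
           (X : T -> config),
      iid_bernoulli P p X ->
      forall (n : nat) (v : vtx),
        (1 <= n)%N ->
        0 <= v.1 <= n%:Z -> 0 <= v.2 <= n%:Z ->
        (\sum_(0 <= i <oo) (influence P p X n v i * influence P p X n v i)
           <= (C * fine (P (pi_event X n v)) `^ (2 - delta))%:E)%E.
Proof.
move=> delta_gt0 /andP[p_gt0 p_lt1].
have [th [th_gt0 th_lt1 th_delta]] := exists_small_exponent delta_gt0.
pose r := (1 - p) `^ th; pose K := r / ((1 - p) * (1 - r)).
have r_gt0 : 0 < r := r_gt0 p_lt1 th.
have r2_lt1 : r ^+ 2 < 1 by rewrite expr_lt1 ?(ltW r_gt0) ?(r_lt1 p_gt0 p_lt1 th_gt0).
exists (K ^+ 2 / (1 - r ^+ 2)) => d T P X iidX n v _ _ _.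
set q := fine (P (pi_event X n v)).
apply: le_trans
  (nneseries_le_geometric (c := (q `^ (1 - th) * K) ^+ 2) (r := r ^+ 2) _ _ _ _) _.
- exact: sqr_ge0.
- by rewrite exprn_gt0 // r2_lt1.
- by move=> i; apply: mule_ge0; apply: influence_ge0.
- move=> i.
  have I_le := influence_le_geometric iidX p_gt0 p_lt1 n v th_gt0 (ltW th_lt1) i.
  by rewrite -exprAC -exprMn EFinM; apply: lee_pmul; rewrite ?influence_ge0.
rewrite lee_fin.
rewrite (_ : _ ^+ 2 / _ = K ^+ 2 / (1 - r ^+ 2) * q `^ (1 - th) ^+ 2); last by ring.
apply: ler_wpM2l; first by rewrite divr_ge0 ?sqr_ge0 // subr_ge0 (ltW r2_lt1).
apply: sqr_powR_le; rewrite ?subr_gt0 //.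
by rewrite (P_pi_event_ge0 iidX) (P_pi_event_le1 iidX).
Qed.
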